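(* Let $X\sim\mathrm{TDL}(a,b,c,d)$ with admissible parameters, $a\neq0$ and $c\in(0,1)$, and let $\mu=E[X]$, $\sigma^2=\mathrm{Var}[X]$, $D=\sigma^2/\mu$. Then $$m_3:=E[(X-\mu)^3]=\frac{\sigma^4}{\mu}+d\mu\sigma^2+\frac{c(1-a)\mu}{(1-c)^2},$$ $$m_4:=E[(X-\mu)^4]=3(2d+1)\sigma^4+\frac{\big(4c(1-a)+(1-ac)^2\big)\sigma^2}{(1-c)^2}+\frac{c^2(1-a^2)\mu}{(1-c)^3}.$$ Consequently the skewness and kurtosis are $$\frac{m_3}{\sigma^3}=\frac{D}{\sigma}+\frac{d\sigma}{D}+\frac{c(1-a)}{(1-c)^2\sigma D},\qquad \frac{m_4}{\sigma^4}=3(2d+1)+\frac{4c(1-a)+(1-ac)^2}{(1-c)^2\sigma^2}+\frac{c^2(1-a^2)}{(1-c)^3\sigma^2 D}.$$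
   Context: $\operatorname{sgn}$ is the sign function with $\operatorname{sgn}(0)=0$. Tempered Discrete Linnik law $\mathrm{TDL}(a,b,c,d)$: the law on $\mathbb{N}$ with probability generating function $g(s)=\big(1+\operatorname{sgn}(a)\,b\,d\,((1-cs)^a-(1-c)^a)\big)^{-1/d}$, $s\in[0,1]$, with admissible parameters $d>0$, $b>0$, and either $a\le0$, $c\in[0,1)$, or $a\in(0,1]$, $c\in[0,1]$. Under the stated hypotheses $\mu=|a|\,b\,c\,(1-c)^{a-1}>0$. *)

From Stdlib Require Import Reals.
Open Scope R_scope.

Definition sgn (x : R) : R :=
  if Rlt_dec 0 x then 1 else if Rlt_dec x 0 then -1 else 0.

(* real power x^a for x >= 0, with the convention 0^a = 0
   (only used with a > 0 at x = 0 for admissible parameters) *)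
Definition rpow (x a : R) : R :=
  if Rle_dec x 0 then 0 else Rpower x a.

Definition TDL_admissible (a b c d : R) : Prop :=
  0 < d /\ 0 < b /\
  ((a <= 0 /\ 0 <= c < 1) \/ (0 < a <= 1 /\ 0 <= c <= 1)).

Definition TDL_pgf (a b c d s : R) : R :=
  Rpower (1 + sgn a * b * d * (rpow (1 - c * s) a - rpow (1 - c) a)) (- (1 / d)).

Definition is_TDL_pmf (a b c d : R) (p : nat -> R) : Prop :=
  (forall n, 0 <= p n) /\
  (forall s, 0 <= s <= 1 -> infinite_sum (fun n => p n * s ^ n) (TDL_pgf a b c d s)).

(* The pgf [G = H^(-1/d)] satisfies [G' = G Q], [Q' = Q ((1 - a) R + d Q)] and [R' = R^2],
   where [Q = |a| b c (1 - c s)^(a - 1) / H] and [R = c / (1 - c s)].  Hence every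
   derivative of [G] is [G] times a polynomial in [Q] and [R], obtained by iterating a
   formal derivation.  At [s = 1] one has [G = 1], [Q = mu] and [R = c / (1 - c)], and the
   k-th derivative there is the factorial moment [E[X (X - 1) ... (X - k + 1)]] (Abel's
   theorem applies since the masses are nonnegative).  The central moments are fixed
   linear combinations of the first four factorial moments. *)

From Coquelicot Require Import Coquelicot.
From Stdlib Require Import Reals Lra Lia List Factorial.
Open Scope R_scope.

Section NonnegativeSeries.

Variable a : nat -> R.
Hypothesis a_ge0 : forall n, 0 <= a n.

Lemma sum_n_ge0 N : 0 <= sum_n a N.
Proof.
  induction N as [|N IH]; [rewrite sum_O; auto|].
  rewrite sum_Sn; unfold plus; simpl; specialize (a_ge0 (S N)); lra.
Qed.

Lemma sum_n_le_S N : sum_n a N <= sum_n a (S N).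
Proof. rewrite sum_Sn; unfold plus; simpl; specialize (a_ge0 (S N)); lra. Qed.

Lemma sum_n_pow_ge s N : 0 < s <= 1 ->
  s ^ N * sum_n a N <= sum_n (fun n => a n * s ^ n) N.
Proof.
  intros Hs; induction N as [|N IH].
  - rewrite !sum_O; simpl; lra.
  - rewrite !sum_Sn; unfold plus; simpl.
    assert (0 <= sum_n a N) by apply sum_n_ge0.
    assert (s * s ^ N <= s ^ N) by (assert (0 <= s ^ N) by (apply pow_le; lra); nra).
    specialize (a_ge0 (S N)); nra.
Qed.

Lemma sum_n_pow_le s N : 0 <= s <= 1 ->
  sum_n (fun n => a n * s ^ n) N <= sum_n a N.
Proof.
  intros Hs; induction N as [|N IH].
  - rewrite !sum_O; simpl; specialize (a_ge0 O); lra.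
  - rewrite !sum_Sn; unfold plus; simpl.
    assert (s ^ N <= 1) by (rewrite <- (pow1 N); apply pow_incr; lra).
    assert (0 <= s ^ N) by (apply pow_le; lra).
    assert (s * s ^ N <= 1) by nra.
    specialize (a_ge0 (S N)); nra.
Qed.

Lemma at_left_1_in_01 : at_left 1 (fun s => 0 < s < 1).
Proof.
  apply (locally_interval _ 1 (Finite 0) (Finite 2)); simpl; try lra.
  intros y H0 H2 Hy; lra.
Qed.

(* Monotone form of Abel's theorem: no convergence at [s = 1] is assumed,
   it follows from the nonnegativity of the coefficients. *)
Lemma is_series_abel_nonneg (F : R -> R) :
  (forall s, 0 < s < 1 -> is_series (fun n => a n * s ^ n) (F s)) ->
  continuous F 1 -> is_series a (F 1).
Proof.
  intros HF Fcont.
  assert (F_left : filterlim F (at_left 1) (locally (F 1))).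
  { eapply filterlim_filter_le_1; [apply filter_le_within | exact Fcont]. }
  assert (sum_le_F1 : forall N, sum_n a N <= F 1).
  { intros N.
    assert (lim_pow : filterlim (fun s => s ^ N * sum_n a N) (at_left 1) (locally (sum_n a N))).
    { eapply filterlim_filter_le_1; [apply filter_le_within|].
      assert (Hc : continuous (fun s => s ^ N * sum_n a N) 1).
      { apply (ex_derive_continuous (K := R_AbsRing) (V := R_NormedModule)); auto_derive; auto. }
      unfold continuous in Hc; rewrite pow1, Rmult_1_l in Hc; exact Hc. }
    apply (filterlim_le (F := at_left 1) (fun s => s ^ N * sum_n a N) F (sum_n a N) (F 1));
      [| exact lim_pow | exact F_left].
    apply filter_imp with (2 := at_left_1_in_01); intros s Hs.
    eapply Rle_trans; [apply sum_n_pow_ge; lra|].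
    apply is_lim_seq_incr_compare; [exact (HF s Hs)|].
    intros n; assert (0 <= a (S n) * s ^ S n)
      by (apply Rmult_le_pos; [auto | apply pow_le; lra]).
    rewrite sum_Sn; unfold plus; simpl in *; lra. }
  destruct (ex_finite_lim_seq_incr (sum_n a) (F 1) sum_n_le_S sum_le_F1) as [S HS].
  assert (S_le : S <= F 1)
    by exact (is_lim_seq_le _ _ S (F 1) sum_le_F1 HS (is_lim_seq_const _)).
  assert (S_ge : F 1 <= S).
  { apply (filterlim_le (F := at_left 1) F (fun _ => S) (F 1) S);
      [| exact F_left | apply filterlim_const].
    apply filter_imp with (2 := at_left_1_in_01); intros s Hs.
    exact (is_lim_seq_le _ _ (F s) S (fun N => sum_n_pow_le s N ltac:(lra)) (HF s Hs) HS). }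
  replace (F 1) with S by lra; exact HS.
Qed.

End NonnegativeSeries.

Fixpoint falling (x : R) (k : nat) : R :=
  match k with
  | O => 1
  | S k => x * falling (x - 1) k
  end.

Lemma falling_INR_lt n k : (n < k)%nat -> falling (INR n) k = 0.
Proof.
  revert k; induction n as [|n IH]; intros [|k] Hnk; try lia.
  - simpl; ring.
  - cbn [falling]; rewrite S_INR; replace (INR n + 1 - 1) with (INR n) by ring.
    rewrite IH by lia; ring.
Qed.

Lemma falling_INR_add m k :
  falling (INR (m + k)) k = INR (fact (m + k)) / INR (fact m).
Proof.
  induction k as [|k IH].
  - rewrite Nat.add_0_r; simpl; field; apply INR_fact_neq_0.
  - rewrite Nat.add_succ_r; cbn [falling]; rewrite S_INR.
    replace (INR (m + k) + 1 - 1) with (INR (m + k)) by ring.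
    rewrite IH, fact_simpl, mult_INR, S_INR.
    field; apply INR_fact_neq_0.
Qed.

Lemma is_series_PS_derive_n_falling k (p : nat -> R) l :
  is_series (PS_derive_n k p) l -> is_series (fun n => falling (INR n) k * p n) l.
Proof.
  intros H; destruct k as [|k].
  - refine (is_series_ext _ _ _ (fun n => _) H).
    unfold PS_derive_n; rewrite Nat.add_0_r; simpl; field; apply INR_fact_neq_0.
  - apply (is_series_decr_n _ (S k)); [lia|]; simpl pred.
    rewrite (sum_n_ext_loc _ (fun _ => zero))
      by (intros n Hn; rewrite falling_INR_lt by lia; apply Rmult_0_l).
    unfold sum_n; rewrite sum_n_m_const_zero.
    match goal with |- is_series _ ?v => replace v with l
      by (unfold plus, opp, zero; simpl; rewrite Ropp_0, Rplus_0_r; reflexivity) end.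
    refine (is_series_ext _ _ _ (fun n => _) H).
    unfold PS_derive_n; rewrite (Nat.add_comm (S k) n), falling_INR_add; reflexivity.
Qed.

Lemma is_series_falling_moments (p : nat -> R) (T : nat -> R -> R) (K : nat) :
  (forall n, 0 <= p n) ->
  (forall s, 0 <= s <= 1 -> is_series (fun n => p n * s ^ n) (T O s)) ->
  (forall k s, (k <= K)%nat -> 0 < s <= 1 -> is_derive (T k) s (T (S k) s)) ->
  forall k, (k <= K)%nat -> is_series (fun n => falling (INR n) k * p n) (T k 1).
Proof.
  intros p_ge0 HT0 HT k Hk.
  assert (radius_ge1 : Rbar_le 1 (CV_radius p)).
  { destruct (Lub_Rbar_correct (CV_disk p)) as [Hub _]; apply Hub.
    exists (T O 1); eapply is_series_ext; [|apply HT0; lra].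
    intros n; simpl; rewrite pow1, Rmult_1_r, Rabs_pos_eq; auto. }
  assert (inside : forall s, 0 < s < 1 -> Rbar_lt (Rabs s) (CV_radius p)).
  { intros s Hs; eapply Rbar_lt_le_trans; [|exact radius_ge1]; simpl.
    rewrite Rabs_pos_eq; lra. }
  assert (Derive_n_eq : forall j, (j <= K)%nat -> forall s, 0 < s < 1 ->
             Derive_n (PSeries p) j s = T j s).
  { induction j as [|j IH]; intros Hj s Hs; simpl.
    - apply is_series_unique, HT0; lra.
    - rewrite (Derive_ext_loc _ (T j)).
      + apply is_derive_unique, HT; [lia | lra].
      + apply (locally_interval _ s (Finite 0) (Finite 1)); simpl; try lra.
        intros y Hy0 Hy1; apply IH; [lia | lra]. }
  apply is_series_PS_derive_n_falling, is_series_abel_nonneg.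
  - intros n; unfold PS_derive_n.
    apply Rmult_le_pos; auto.
    apply Rmult_le_pos; [apply pos_INR | apply Rlt_le, Rinv_0_lt_compat, INR_fact_lt_0].
  - intros s Hs; rewrite <- Derive_n_eq, Derive_n_PSeries by auto.
    apply Series_correct, ex_series_Rabs, CV_disk_inside.
    rewrite CV_radius_derive_n; auto.
  - apply (ex_derive_continuous (K := R_AbsRing) (V := R_NormedModule)).
    exists (T (S k) 1); apply HT; [lia | lra].
Qed.

Lemma is_series_sum_n (u : nat -> nat -> R) (m c : nat -> R) (N : nat) :
  (forall k, (k <= N)%nat -> is_series (u k) (m k)) ->
  is_series (fun n => sum_n (fun k => c k * u k n) N) (sum_n (fun k => c k * m k) N).
Proof.
  induction N as [|N IH]; intros Hu.
  - rewrite sum_O.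
    refine (is_series_ext _ _ _ (fun n => _) (is_series_scal (c O) _ _ (Hu O (le_n _)))).
    rewrite sum_O; reflexivity.
  - rewrite sum_Sn.
    refine (is_series_ext _ _ _ (fun n => _)
      (is_series_plus _ _ _ _ (IH (fun k Hk => Hu k ltac:(lia)))
         (is_series_scal (c (S N)) _ _ (Hu (S N) (le_n _))))).
    rewrite sum_Sn; reflexivity.
Qed.

Definition monomial := (R * nat * nat)%type.

Definition poly_eval (L : list monomial) (q r : R) : R :=
  fold_right (fun m acc => let '(c, i, j) := m in c * q ^ i * r ^ j + acc) 0 L.

(* The derivation [q^i r^j |-> q^(i+1) r^j + i q^i (al r + d q) r^j + j q^i r^(j+1)]
   describes [(g q^i r^j)'/g] when [g' = g q], [q' = q (al r + d q)] and [r' = r^2]. *)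
Definition monomial_deriv (al d : R) (m : monomial) : list monomial :=
  let '(c, i, j) := m in
  (c, S i, j) :: (c * INR i * al, i, S j) :: (c * INR i * d, S i, j) :: (c * INR j, i, S j) :: nil.

Definition poly_deriv (al d : R) (L : list monomial) : list monomial :=
  flat_map (monomial_deriv al d) L.

Definition poly_deriv_n (al d : R) (k : nat) : list monomial :=
  Nat.iter k (poly_deriv al d) ((1, O, O) :: nil).

Lemma poly_eval_app L1 L2 q r : poly_eval (L1 ++ L2) q r = poly_eval L1 q r + poly_eval L2 q r.
Proof. induction L1 as [|[[c i] j] L IH]; simpl; [ring | rewrite IH; ring]. Qed.

Section PolyDerivation.

Variables (g q r : R -> R) (al d s : R).
Hypothesis g_der : is_derive g s (g s * q s).
Hypothesis q_der : is_derive q s (q s * (al * r s + d * q s)).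
Hypothesis r_der : is_derive r s (r s ^ 2).

Lemma is_derive_monomial c i j :
  is_derive (fun x => g x * (c * q x ^ i * r x ^ j)) s
    (g s * poly_eval (monomial_deriv al d (c, i, j)) (q s) (r s)).
Proof.
  assert (Dg : Derive (fun x => g x) s = g s * q s) by (apply is_derive_unique, g_der).
  assert (Dq : Derive (fun x => q x) s = q s * (al * r s + d * q s))
    by (apply is_derive_unique, q_der).
  assert (Dr : Derive (fun x => r x) s = r s ^ 2) by (apply is_derive_unique, r_der).
  auto_derive; [repeat split; eexists; eauto|].
  rewrite Dg, Dq, Dr; simpl.
  destruct i as [|i]; destruct j as [|j]; simpl; rewrite ?Rmult_0_l, ?Rmult_0_r; ring.
Qed.

Lemma is_derive_poly_eval L :
  is_derive (fun x => g x * poly_eval L (q x) (r x)) s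
    (g s * poly_eval (poly_deriv al d L) (q s) (r s)).
Proof.
  induction L as [|[[c i] j] L IH].
  - simpl; rewrite Rmult_0_r.
    apply (is_derive_ext (fun _ => 0)); [intros t; simpl; ring | apply (is_derive_const 0)].
  - change (poly_deriv al d ((c, i, j) :: L))
      with (monomial_deriv al d (c, i, j) ++ poly_deriv al d L).
    rewrite poly_eval_app, Rmult_plus_distr_l.
    set (gm := fun x => g x * (c * q x ^ i * r x ^ j)).
    set (gL := fun x => g x * poly_eval L (q x) (r x)).
    apply (is_derive_ext (fun x => gm x + gL x)); [intros t; unfold gm, gL; simpl; ring|].
    apply (is_derive_plus gm gL); [apply is_derive_monomial | exact IH].
Qed.

End PolyDerivation.

Lemma sgn_mul_self x : sgn x * x = Rabs x.
Proof.
  unfold sgn; destruct (Rlt_dec 0 x); [rewrite Rabs_pos_eq; lra|].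
  destruct (Rlt_dec x 0); [rewrite Rabs_left; lra|].
  replace x with 0 by lra; rewrite Rabs_R0; ring.
Qed.

Lemma is_derive_Rpower_fun (h : R -> R) s dh e : is_derive h s dh -> 0 < h s ->
  is_derive (fun x => Rpower (h x) e) s (e * dh / h s * Rpower (h s) e).
Proof.
  intros Hd Hpos; unfold Rpower.
  assert (Dh : Derive (fun x => h x) s = dh) by (apply is_derive_unique, Hd).
  auto_derive; [repeat split; [eexists; eauto | lra]|].
  rewrite Dh; field; lra.
Qed.

Section TDL.

Variables a b c d : R.
Hypotheses (b_pos : 0 < b) (d_pos : 0 < d) (c_range : 0 < c < 1).

Definition tdl_base s := Rpower (1 - c * s) a.
Definition tdl_H s := 1 + sgn a * b * d * (tdl_base s - Rpower (1 - c) a).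
Definition tdl_G s := Rpower (tdl_H s) (- (1 / d)).
(* [G'/G]; its value at [s = 1] is the mean. *)
Definition tdl_Q s := Rabs a * b * c * tdl_base s / ((1 - c * s) * tdl_H s).
Definition tdl_R s := c / (1 - c * s).

Lemma tdl_domain s : 0 <= s <= 1 -> 0 < 1 - c * s /\ 1 <= tdl_H s.
Proof.
  intros Hs.
  assert (Hcs : 1 - c <= 1 - c * s) by nra.
  assert (Hln : ln (1 - c) <= ln (1 - c * s)) by (apply ln_le; lra).
  assert (exp_le : forall x y, x <= y -> exp x <= exp y)
    by (intros x y [Hxy | ->]; [apply Rlt_le, exp_increasing, Hxy | lra]).
  assert (0 <= sgn a * (tdl_base s - Rpower (1 - c) a)).
  { unfold sgn, tdl_base, Rpower; destruct (Rlt_dec 0 a).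
    - assert (exp (a * ln (1 - c)) <= exp (a * ln (1 - c * s))) by (apply exp_le; nra); lra.
    - destruct (Rlt_dec a 0); [|lra].
      assert (exp (a * ln (1 - c * s)) <= exp (a * ln (1 - c))) by (apply exp_le; nra); lra. }
  assert (0 <= b * d) by nra.
  unfold tdl_H; split; [lra | nra].
Qed.

Lemma TDL_pgf_eq s : 0 <= s <= 1 -> TDL_pgf a b c d s = tdl_G s.
Proof.
  intros Hs; unfold TDL_pgf, tdl_G, tdl_H, tdl_base, rpow.
  destruct (Rle_dec (1 - c * s) 0); [nra|].
  destruct (Rle_dec (1 - c) 0); [lra | reflexivity].
Qed.

Section Derivatives.

Variable s : R.
Hypothesis s_range : 0 <= s <= 1.

Lemma is_derive_tdl_base : is_derive tdl_base s (- (a * c) * tdl_base s / (1 - c * s)).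
Proof.
  destruct (tdl_domain s s_range) as [Hcs _].
  unfold tdl_base, Rpower; auto_derive; [lra|].
  replace (1 + - (c * s)) with (1 - c * s) by ring; field; lra.
Qed.

Lemma is_derive_tdl_H : is_derive tdl_H s (- d * tdl_Q s * tdl_H s).
Proof.
  destruct (tdl_domain s s_range) as [Hcs HH].
  assert (Dbase : Derive (fun x => tdl_base x) s = - (a * c) * tdl_base s / (1 - c * s))
    by (apply is_derive_unique, is_derive_tdl_base).
  unfold tdl_H at 1; auto_derive; [eexists; apply is_derive_tdl_base|].
  rewrite Dbase; unfold tdl_Q; rewrite <- sgn_mul_self; field; lra.
Qed.

Lemma is_derive_tdl_G : is_derive tdl_G s (tdl_G s * tdl_Q s).
Proof.
  destruct (tdl_domain s s_range) as [Hcs HH].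
  replace (tdl_G s * tdl_Q s) with
    (- (1 / d) * (- d * tdl_Q s * tdl_H s) / tdl_H s * Rpower (tdl_H s) (- (1 / d)))
    by (unfold tdl_G; field; lra).
  apply is_derive_Rpower_fun; [apply is_derive_tdl_H | lra].
Qed.

Lemma is_derive_tdl_Q : is_derive tdl_Q s (tdl_Q s * ((1 - a) * tdl_R s + d * tdl_Q s)).
Proof.
  destruct (tdl_domain s s_range) as [Hcs HH].
  assert (Dbase : Derive (fun x => tdl_base x) s = - (a * c) * tdl_base s / (1 - c * s))
    by (apply is_derive_unique, is_derive_tdl_base).
  assert (DH : Derive (fun x => tdl_H x) s = - d * tdl_Q s * tdl_H s)
    by (apply is_derive_unique, is_derive_tdl_H).
  unfold tdl_Q at 1; auto_derive.
  { split; [eexists; apply is_derive_tdl_base|].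
    split; [eexists; apply is_derive_tdl_H|].
    split; [apply Rgt_not_eq, Rmult_lt_0_compat; lra | exact I]. }
  rewrite Dbase, DH; unfold tdl_Q, tdl_R; field; lra.
Qed.

Lemma is_derive_tdl_R : is_derive tdl_R s (tdl_R s ^ 2).
Proof.
  destruct (tdl_domain s s_range) as [Hcs _].
  unfold tdl_R; auto_derive; [lra | field; lra].
Qed.

End Derivatives.

Lemma tdl_G_1 : tdl_G 1 = 1.
Proof.
  assert (H1 : tdl_H 1 = 1) by (unfold tdl_H, tdl_base; rewrite Rmult_1_r; ring).
  unfold tdl_G, Rpower; rewrite H1, ln_1, Rmult_0_r; apply exp_0.
Qed.

Lemma tdl_Q_1_pos : a <> 0 -> 0 < tdl_Q 1.
Proof.
  intros Ha; destruct (tdl_domain 1 ltac:(lra)) as [Hc1 HH].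
  assert (0 < Rabs a) by (apply Rabs_pos_lt, Ha).
  assert (0 < tdl_base 1) by apply exp_pos.
  unfold tdl_Q; apply Rdiv_lt_0_compat; repeat apply Rmult_lt_0_compat; lra.
Qed.

Lemma TDL_falling_moments p : is_TDL_pmf a b c d p ->
  forall k, is_series (fun n => falling (INR n) k * p n)
              (poly_eval (poly_deriv_n (1 - a) d k) (tdl_Q 1) (c / (1 - c))).
Proof.
  intros [p_ge0 Hpgf] k.
  set (T := fun j s => tdl_G s * poly_eval (poly_deriv_n (1 - a) d j) (tdl_Q s) (tdl_R s)).
  replace (poly_eval _ _ _) with (T k 1)
    by (unfold T, tdl_R; rewrite tdl_G_1, Rmult_1_l, Rmult_1_r; reflexivity).
  apply (is_series_falling_moments p T k); [exact p_ge0 | | | lia].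
  - intros s Hs; unfold T; simpl.
    replace (tdl_G s * (1 * 1 * 1 + 0)) with (TDL_pgf a b c d s)
      by (rewrite TDL_pgf_eq by exact Hs; ring).
    apply is_series_Reals, Hpgf, Hs.
  - intros j s _ Hs; unfold T; simpl Nat.iter.
    apply is_derive_poly_eval;
      [apply is_derive_tdl_G | apply is_derive_tdl_Q | apply is_derive_tdl_R]; lra.
Qed.

End TDL.

Ltac expand_sum_n :=
  cbn [length Nat.pred]; rewrite ?sum_Sn, ?sum_O; unfold plus; simpl;
  match goal with |- ?x = ?y => change (@eq R x y) end.

Lemma moments_of_falling_moments (p : nat -> R) (a c d mu : R) :
  c < 1 -> 0 < mu ->
  (forall k, (k <= 4)%nat -> is_series (fun n => falling (INR n) k * p n)
                              (poly_eval (poly_deriv_n (1 - a) d k) mu (c / (1 - c)))) ->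
  let sigma2 := mu * (1 + d * mu + (1 - a) * c / (1 - c)) in
  is_series (fun n => INR n * p n) mu /\
  is_series (fun n => (INR n - mu) ^ 2 * p n) sigma2 /\
  is_series (fun n => (INR n - mu) ^ 3 * p n)
    (sigma2 ^ 2 / mu + d * mu * sigma2 + c * (1 - a) * mu / (1 - c) ^ 2) /\
  is_series (fun n => (INR n - mu) ^ 4 * p n)
    (3 * (2 * d + 1) * sigma2 ^ 2
     + (4 * c * (1 - a) + (1 - a * c) ^ 2) * sigma2 / (1 - c) ^ 2
     + c ^ 2 * (1 - a ^ 2) * mu / (1 - c) ^ 3).
Proof.
  intros Hc Hmu Hm sigma2.
  assert (Hc1 : 1 - c <> 0) by lra.
  assert (comb : forall (cs : list R) (f : R -> R) v, (length cs <= 5)%nat ->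
    (forall x, f x = sum_n (fun k => nth k cs 0 * falling x k) (pred (length cs))) ->
    sum_n (fun k => nth k cs 0 * poly_eval (poly_deriv_n (1 - a) d k) mu (c / (1 - c)))
      (pred (length cs)) = v ->
    is_series (fun n => f (INR n) * p n) v).
  { intros cs f v Hlen Hf <-.
    apply (is_series_ext
      (fun n => sum_n (fun k => nth k cs 0 * (falling (INR n) k * p n)) (pred (length cs))));
      [intros n; rewrite Hf, <- (sum_n_mult_r (p n)); apply sum_n_ext;
       intros k; symmetry; apply Rmult_assoc|].
    apply is_series_sum_n; intros k Hk; apply Hm; lia. }
  split; [|split; [|split]].
  - apply (comb (0 :: 1 :: nil) (fun x => x)); [simpl; lia | intros x; expand_sum_n; ring |].
    expand_sum_n; simpl; ring.
  - apply (comb (mu ^ 2 :: 1 - 2 * mu :: 1 :: nil) (fun x => (x - mu) ^ 2));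
      [simpl; lia | intros x; expand_sum_n; ring |].
    expand_sum_n; simpl; unfold sigma2; field; auto.
  - apply (comb (- mu ^ 3 :: 1 - 3 * mu + 3 * mu ^ 2 :: 3 - 3 * mu :: 1 :: nil)
                 (fun x => (x - mu) ^ 3));
      [simpl; lia | intros x; expand_sum_n; ring |].
    expand_sum_n; simpl; unfold sigma2; field; lra.
  - apply (comb (mu ^ 4 :: 1 - 4 * mu + 6 * mu ^ 2 - 4 * mu ^ 3 :: 7 - 12 * mu + 6 * mu ^ 2
                 :: 6 - 4 * mu :: 1 :: nil) (fun x => (x - mu) ^ 4));
      [simpl; lia | intros x; expand_sum_n; ring |].
    expand_sum_n; simpl; unfold sigma2; field; lra.
Qed.

Lemma standardized_moments (a c d mu sigma2 : R) :
  c < 1 -> 0 < mu -> 0 < sigma2 ->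
  let sigma := sqrt sigma2 in
  let D := sigma2 / mu in
  (sigma2 ^ 2 / mu + d * mu * sigma2 + c * (1 - a) * mu / (1 - c) ^ 2) / sigma ^ 3
    = D / sigma + d * sigma / D + c * (1 - a) / ((1 - c) ^ 2 * sigma * D) /\
  (3 * (2 * d + 1) * sigma2 ^ 2
   + (4 * c * (1 - a) + (1 - a * c) ^ 2) * sigma2 / (1 - c) ^ 2
   + c ^ 2 * (1 - a ^ 2) * mu / (1 - c) ^ 3) / sigma ^ 4
    = 3 * (2 * d + 1) + (4 * c * (1 - a) + (1 - a * c) ^ 2) / ((1 - c) ^ 2 * sigma ^ 2)
      + c ^ 2 * (1 - a ^ 2) / ((1 - c) ^ 3 * sigma ^ 2 * D).
Proof.
  intros Hc Hmu Hs2 sigma D.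
  assert (Hsigma : 0 < sigma) by (apply sqrt_lt_R0, Hs2).
  assert (Hsq : sigma2 = sigma * sigma) by (symmetry; apply sqrt_sqrt; lra).
  unfold D; rewrite Hsq; split; field; repeat split; lra.
Qed.

Theorem mainTheorem7 (a b c d : R) (p : nat -> R) :
  TDL_admissible a b c d -> a <> 0 -> 0 < c < 1 ->
  is_TDL_pmf a b c d p ->
  exists mu sigma2 : R,
    infinite_sum (fun n => INR n * p n) mu /\
    infinite_sum (fun n => (INR n - mu) ^ 2 * p n) sigma2 /\
    let sigma := sqrt sigma2 in
    let D := sigma2 / mu in
    let m3 := sigma2 ^ 2 / mu + d * mu * sigma2
              + c * (1 - a) * mu / (1 - c) ^ 2 in
    let m4 := 3 * (2 * d + 1) * sigma2 ^ 2
              + (4 * c * (1 - a) + (1 - a * c) ^ 2) * sigma2 / (1 - c) ^ 2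
              + c ^ 2 * (1 - a ^ 2) * mu / (1 - c) ^ 3 in
    infinite_sum (fun n => (INR n - mu) ^ 3 * p n) m3 /\
    infinite_sum (fun n => (INR n - mu) ^ 4 * p n) m4 /\
    m3 / sigma ^ 3 = D / sigma + d * sigma / D
                     + c * (1 - a) / ((1 - c) ^ 2 * sigma * D) /\
    m4 / sigma ^ 4 = 3 * (2 * d + 1)
                     + (4 * c * (1 - a) + (1 - a * c) ^ 2) / ((1 - c) ^ 2 * sigma ^ 2)
                     + c ^ 2 * (1 - a ^ 2) / ((1 - c) ^ 3 * sigma ^ 2 * D).
Proof.
  intros [Hd [Hb Hadm]] Ha Hc Hpmf.
  assert (Ha1 : a <= 1) by (destruct Hadm as [[? ?] | [? ?]]; lra).
  set (mu := tdl_Q a b c d 1).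
  assert (Hmu : 0 < mu) by (apply tdl_Q_1_pos; assumption).
  set (sigma2 := mu * (1 + d * mu + (1 - a) * c / (1 - c))).
  assert (Hs2 : 0 < sigma2).
  { assert (0 <= (1 - a) * c / (1 - c)) by (apply Rdiv_le_0_compat; nra).
    apply Rmult_lt_0_compat; nra. }
  destruct (moments_of_falling_moments p a c d mu ltac:(lra) Hmu
              (fun k _ => TDL_falling_moments a b c d Hb Hd Hc p Hpmf k))
    as (Hmean & Hvar & Hm3 & Hm4).
  destruct (standardized_moments a c d mu sigma2 ltac:(lra) Hmu Hs2) as [Hskew Hkurt].
  exists mu, sigma2.
  repeat split; try apply is_series_Reals; assumption.
Qed.
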